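(* Let $U$ be a connected coordinate domain with coordinates $(x^1,x^2)$ carrying a connection $\nabla$ whose Christoffel symbols satisfy $\Gamma_{ij}{}^k=\Gamma_{ij}{}^k(x^1)$, $\Gamma_{11}{}^1=0$, $\Gamma_{11}{}^2=0$ (so that $\partial_{x^2}$ is an affine Killing vector field). Let $\mathfrak{K}_{\mathbb{C}}$ denote the complex affine Killing vector fields on $U$ (complex-coefficient vector fields satisfying the affine Killing equations), $\mathfrak{K}$ the real ones, and for $\alpha\in\mathbb{C}$ set $\mathfrak{K}_\alpha:=\{X=e^{\alpha x^2}v(x^1)\partial_{x^2}:X\in\mathfrak{K}_{\mathbb{C}}\}$. (1) If there exists $X\in\mathfrak{K}_\alpha$ which is not a constant multiple of $\partial_{x^2}$, then $$\Gamma_{11}{}^1=0,\ \Gamma_{11}{}^2=0,\ \Gamma_{12}{}^1=0,\ \Gamma_{21}{}^1=0,\ \Gamma_{22}{}^1=0,\ \Gamma_{22}{}^2=-\alpha.\qquad(\ast)$$ (2) Suppose the Christoffel symbols satisfy $(\ast)$ for a given $\alpha$. Then: (a) if $u(x^1,x^2)\partial_{x^1}+w(x^1,x^2)\partial_{x^2}\in\mathfrak{K}_{\mathbb{C}}$, then (i) $\alpha\,\partial_{x^2}u+\partial_{x^2}^2u=0$ and (ii) $(\Gamma_{12}{}^2(x^1)+\Gamma_{21}{}^2(x^1))\partial_{x^1}w+\partial_{x^1}^2w=0$; (b) $\mathfrak{K}_\alpha=\{e^{\alpha x^2}v(x^1)\partial_{x^2}:(\Gamma_{12}{}^2(x^1)+\Gamma_{21}{}^2(x^1))v'(x^1)+v''(x^1)=0\}$;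 (c) if moreover $\alpha=0$ and $u(x^1,x^2)\partial_{x^1}+\{\sum_nw_n(x^1)(x^2)^n\}\partial_{x^2}\in\mathfrak{K}_{\mathbb{C}}$, then $w_n(x^1)\partial_{x^2}\in\mathfrak{K}_0$ for all $n$; furthermore $x^2\partial_{x^2}\in\mathfrak{K}$.
   Context: $\nabla_{\partial_{x^i}}\partial_{x^j}=\Gamma_{ij}{}^k\partial_{x^k}$ (torsion allowed). A vector field $X=a^k\partial_{x^k}$ (real or complex coefficients) is an affine Killing vector field iff for all $1\le i,j,k\le2$: $$0=\frac{\partial^2a^k}{\partial x^i\partial x^j}+\sum_\ell\Big\{a^\ell\frac{\partial\Gamma_{ij}{}^k}{\partial x^\ell}-\Gamma_{ij}{}^\ell\frac{\partial a^k}{\partial x^\ell}+\Gamma_{i\ell}{}^k\frac{\partial a^\ell}{\partial x^j}+\Gamma_{\ell j}{}^k\frac{\partial a^\ell}{\partial x^i}\Big\}.$$ *)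

From Stdlib Require Import Reals List.
From Coquelicot Require Import Coquelicot.

Open Scope R_scope.

Inductive idx := I1 | I2.

Definition Cderive (f : R -> C) (t : R) : C :=
  (Derive (fun s => fst (f s)) t, Derive (fun s => snd (f s)) t).

Definition ex_Cderive (f : R -> C) (t : R) : Prop :=
  ex_derive (fun s => fst (f s)) t /\ ex_derive (fun s => snd (f s)) t.

Definition partial (i : idx) (f : R * R -> C) (p : R * R) : C :=
  match i with
  | I1 => Cderive (fun t => f (t, snd p)) (fst p)
  | I2 => Cderive (fun t => f (fst p, t)) (snd p)
  end.

Definition ex_partial (i : idx) (f : R * R -> C) (p : R * R) : Prop :=
  match i with
  | I1 => ex_Cderive (fun t => f (t, snd p)) (fst p)
  | I2 => ex_Cderive (fun t => f (fst p, t)) (snd p)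
  end.

Fixpoint iter_partial (l : list idx) (f : R * R -> C) : R * R -> C :=
  match l with
  | nil => f
  | cons i l' => partial i (iter_partial l' f)
  end.

Definition smooth2 (U : R * R -> Prop) (f : R * R -> C) : Prop :=
  forall (l : list idx) (p : R * R), U p ->
    continuous (iter_partial l f) p /\
    (forall i, ex_partial i (iter_partial l f) p).

Definition smooth1 (I : R -> Prop) (g : R -> R) : Prop :=
  forall (n : nat) (x : R), I x -> ex_derive (Derive_n g n) x.

Definition smooth1C (I : R -> Prop) (v : R -> C) : Prop :=
  smooth1 I (fun t => fst (v t)) /\ smooth1 I (fun t => snd (v t)).

Definition connected2 (U : R * R -> Prop) : Prop :=
  forall A B : R * R -> Prop, open A -> open B ->
    (forall p, U p -> A p \/ B p) ->
    (forall p, U p -> A p -> B p -> False) ->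
    (forall p, U p -> A p) \/ (forall p, U p -> B p).

Definition proj1U (U : R * R -> Prop) (x : R) : Prop := exists y, U (x, y).

Definition Cexp (z : C) : C :=
  (exp (fst z) * cos (snd z), exp (fst z) * sin (snd z)).

(** Christoffel symbols Gam i j k = Gamma_{ij}^k, functions of x^1 only;
    as functions on R^2: *)
Definition GamC (Gam : idx -> idx -> idx -> R -> R) (i j k : idx)
  (p : R * R) : C := RtoC (Gam i j k (fst p)).

Definition sum_idx (F : idx -> C) : C := Cplus (F I1) (F I2).

Definition Killing_eq (Gam : idx -> idx -> idx -> R -> R)
  (a : idx -> R * R -> C) (p : R * R) (i j k : idx) : Prop :=
  Cplus (partial i (partial j (a k)) p)
    (sum_idx (fun l =>
       Cplus (Cplus (Cminus (Cmult (a l p) (partial l (GamC Gam i j k) p))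
                            (Cmult (GamC Gam i j l p) (partial l (a k) p)))
                    (Cmult (GamC Gam i l k p) (partial j (a l) p)))
             (Cmult (GamC Gam l j k p) (partial i (a l) p))))
  = RtoC 0.

Definition KC (U : R * R -> Prop) (Gam : idx -> idx -> idx -> R -> R)
  (a : idx -> R * R -> C) : Prop :=
  (forall k, smooth2 U (a k)) /\
  (forall p, U p -> forall i j k, Killing_eq Gam a p i j k).

Definition KR (U : R * R -> Prop) (Gam : idx -> idx -> idx -> R -> R)
  (a : idx -> R * R -> C) : Prop :=
  KC U Gam a /\ (forall k p, U p -> snd (a k p) = 0).

Definition K_alpha (U : R * R -> Prop) (Gam : idx -> idx -> idx -> R -> R)
  (alpha : C) (a : idx -> R * R -> C) : Prop :=
  KC U Gam a /\
  exists v : R -> C, forall p, U p ->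
    a I1 p = RtoC 0 /\
    a I2 p = Cmult (Cexp (Cmult alpha (RtoC (snd p)))) (v (fst p)).

Definition star (U : R * R -> Prop) (Gam : idx -> idx -> idx -> R -> R)
  (alpha : C) : Prop :=
  forall x, proj1U U x ->
    Gam I1 I1 I1 x = 0 /\ Gam I1 I1 I2 x = 0 /\ Gam I1 I2 I1 x = 0 /\
    Gam I2 I1 I1 x = 0 /\ Gam I2 I2 I1 x = 0 /\
    RtoC (Gam I2 I2 I2 x) = Copp alpha.

Definition vf (a1 a2 : R * R -> C) : idx -> R * R -> C :=
  fun k => match k with I1 => a1 | I2 => a2 end.

Fixpoint Csum (N : nat) (f : nat -> C) : C :=
  match N with
  | O => RtoC 0
  | S m => Cplus (Csum m f) (f m)
  end.

(* Write a field of K_alpha as X = e^(alpha x^2) v(x^1) d/dx^2. Every partial derivative of its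
   coefficient is again of the form alpha^k e^(alpha x^2) v^(n)(x^1), so after division by
   e^(alpha x^2) the affine Killing equations become linear relations between v, v' and v'' whose
   coefficients involve Gamma and alpha. Since Gamma_11^1 = Gamma_11^2 = 0, the (1,1,2) relation
   is the linear ODE v'' + (Gamma_12^2 + Gamma_21^2) v' = 0; the projection of U on the x^1-axis is
   an interval, so v' either vanishes nowhere or vanishes identically there. In the first case the
   other relations, divided by v', give (star); in the second, v is a constant, nonzero and with
   alpha <> 0 because X is not a constant multiple of d/dx^2, and dividing by alpha v gives (star).
   Conversely, under (star) all relations except the ODE hold identically, which is (2b). (2a) is
   the (2,2,1) and (1,1,2) equations of an arbitrary field, and (2c) follows from (2a)(ii) by
   comparing the coefficients of a polynomial in x^2. *)

From Stdlib Require Import Reals List Lra Lia Classical.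
From Coquelicot Require Import Coquelicot.

Open Scope R_scope.

(** * Partial derivatives on open subsets of the plane *)

Lemma locally_section1 (U : R * R -> Prop) x y :
  open U -> U (x, y) -> locally x (fun t => U (t, y)).
Proof.
  intros HU Hxy. destruct (HU _ Hxy) as [e He].
  exists e. intros t Ht. apply He. split; [exact Ht | apply ball_center].
Qed.

Lemma locally_section2 (U : R * R -> Prop) x y :
  open U -> U (x, y) -> locally y (fun t => U (x, t)).
Proof.
  intros HU Hxy. destruct (HU _ Hxy) as [e He].
  exists e. intros t Ht. apply He. split; [apply ball_center | exact Ht].
Qed.

Lemma locally_proj1U U x : open U -> proj1U U x -> locally x (proj1U U).
Proof.
  intros HU [y Hy]. generalize (locally_section1 U x y HU Hy).
  apply filter_imp. intros t Ht. exists y; exact Ht.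
Qed.

Lemma partial_ext U f g i p : open U -> (forall q, U q -> f q = g q) -> U p ->
  partial i f p = partial i g p.
Proof.
  intros HU Hfg Hp. destruct p as [x y].
  assert (L1 := locally_section1 U x y HU Hp).
  assert (L2 := locally_section2 U x y HU Hp).
  destruct i; unfold partial, Cderive; simpl; f_equal; apply Derive_ext_loc;
    [revert L1 | revert L1 | revert L2 | revert L2];
    apply filter_imp; intros t Ht; rewrite Hfg; auto.
Qed.

Lemma ex_partial_ext U f g i p : open U -> (forall q, U q -> f q = g q) -> U p ->
  ex_partial i f p -> ex_partial i g p.
Proof.
  intros HU Hfg Hp. destruct p as [x y].
  assert (L1 := locally_section1 U x y HU Hp).
  assert (L2 := locally_section2 U x y HU Hp).
  destruct i; intros [H1 H2]; split; simpl in *;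
    [ apply (ex_derive_ext_loc (fun s => fst (f (s, y))))
    | apply (ex_derive_ext_loc (fun s => snd (f (s, y))))
    | apply (ex_derive_ext_loc (fun s => fst (f (x, s))))
    | apply (ex_derive_ext_loc (fun s => snd (f (x, s)))) ]; auto;
    [revert L1 | revert L1 | revert L2 | revert L2];
    apply filter_imp; intros t Ht; rewrite Hfg; auto.
Qed.

Lemma partial_ext_everywhere f g i p : (forall q, f q = g q) -> partial i f p = partial i g p.
Proof. intro Hfg. apply (partial_ext (fun _ => True)); auto using open_true. Qed.

Lemma iter_partial_ext U f g : open U -> (forall q, U q -> f q = g q) ->
  forall l q, U q -> iter_partial l f q = iter_partial l g q.
Proof.
  intros HU Hfg l. induction l as [|i l IH]; intros q Hq; simpl; auto.
  apply (partial_ext U); auto.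
Qed.

Lemma smooth2_ext U f g : open U -> (forall q, U q -> f q = g q) ->
  smooth2 U g -> smooth2 U f.
Proof.
  intros HU Hfg Hg l p Hp. destruct (Hg l p Hp) as [Hc Hd].
  assert (E := iter_partial_ext U f g HU Hfg l).
  split.
  - apply (continuous_ext_loc _ (iter_partial l g)); auto.
    generalize (HU p Hp). apply filter_imp. intros q Hq. symmetry. auto.
  - intro i. apply (ex_partial_ext U (iter_partial l g)); auto.
    intros q Hq. symmetry. auto.
Qed.

Lemma continuous_C_components {T : UniformSpace} (f : T -> C) p :
  continuous (fun q => fst (f q)) p -> continuous (fun q => snd (f q)) p ->
  continuous f p.
Proof.
  intros H1 H2.
  apply (continuous_ext (fun q => (fst (f q), snd (f q))));
    [intro; symmetry; apply surjective_pairing|].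
  apply (continuous_comp_2 _ _ pair); auto.
  apply (continuous_ext (fun z : R * R => z)); [intros []; reflexivity | apply continuous_id].
Qed.

Lemma continuous_C_fst {T : UniformSpace} (f : T -> C) p :
  continuous f p -> continuous (fun q => fst (f q)) p.
Proof. intro H. apply (continuous_comp f fst); auto. destruct (f p). apply continuous_fst. Qed.

Lemma continuous_C_snd {T : UniformSpace} (f : T -> C) p :
  continuous f p -> continuous (fun q => snd (f q)) p.
Proof. intro H. apply (continuous_comp f snd); auto. destruct (f p). apply continuous_snd. Qed.

Lemma continuous_Cmult {T : UniformSpace} (f g : T -> C) p :
  continuous f p -> continuous g p -> continuous (fun q => Cmult (f q) (g q)) p.
Proof.
  intros Hf Hg.
  assert (Hf1 := continuous_C_fst f p Hf). assert (Hf2 := continuous_C_snd f p Hf).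
  assert (Hg1 := continuous_C_fst g p Hg). assert (Hg2 := continuous_C_snd g p Hg).
  apply continuous_C_components; simpl.
  - apply (continuous_minus (V := R_NormedModule));
      apply (continuous_mult (K := R_AbsRing)); auto.
  - apply (continuous_plus (V := R_NormedModule));
      apply (continuous_mult (K := R_AbsRing)); auto.
Qed.

Lemma partial_const (c : C) i p : partial i (fun _ => c) p = RtoC 0.
Proof.
  destruct p, i; unfold partial, Cderive; simpl; rewrite !Derive_const; reflexivity.
Qed.

Lemma iter_partial_zero l q : iter_partial l (fun _ => RtoC 0) q = RtoC 0.
Proof.
  induction l as [|i l IH] in q |- *; [reflexivity|]. simpl.
  rewrite (partial_ext_everywhere _ (fun _ => RtoC 0) i q IH). apply partial_const.
Qed.

Lemma partial1_snd q : partial I1 (fun p => RtoC (snd p)) q = RtoC 0.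
Proof. destruct q. simpl. unfold Cderive, RtoC. simpl. rewrite !Derive_const. reflexivity. Qed.

Lemma partial2_snd q : partial I2 (fun p => RtoC (snd p)) q = RtoC 1.
Proof.
  destruct q. simpl. unfold Cderive, RtoC. simpl. rewrite Derive_id, Derive_const. reflexivity.
Qed.

Lemma partial_partial_const (c : C) i j q : partial i (partial j (fun _ => c)) q = RtoC 0.
Proof.
  rewrite (partial_ext_everywhere _ (fun _ => RtoC 0) i q (partial_const c j)).
  apply partial_const.
Qed.

Lemma partial_partial_snd i j q : partial i (partial j (fun p => RtoC (snd p))) q = RtoC 0.
Proof.
  destruct j; [ rewrite (partial_ext_everywhere _ (fun _ => RtoC 0) i q partial1_snd)
              | rewrite (partial_ext_everywhere _ (fun _ => RtoC 1) i q partial2_snd) ];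
    apply partial_const.
Qed.

Lemma iter_partial_snd i l :
  exists c, forall q, iter_partial (i :: l) (fun p => RtoC (snd p)) q = c.
Proof.
  induction l as [|j l IH] in i |- *.
  - destruct i; [exists (RtoC 0); apply partial1_snd | exists (RtoC 1); apply partial2_snd].
  - destruct (IH j) as [c Hc]. exists (RtoC 0). intro q.
    change (partial i (iter_partial (j :: l) (fun p => RtoC (snd p))) q = RtoC 0).
    rewrite (partial_ext_everywhere _ (fun _ => c) i q Hc). apply partial_const.
Qed.

Lemma continuous_ex_partial_of_const (h : R * R -> C) c p : (forall q, h q = c) ->
  continuous h p /\ (forall i, ex_partial i h p).
Proof.
  intro Hh. split.
  - apply (continuous_ext (fun _ => c)); [intro; symmetry; auto | apply continuous_const].
  - intro i. apply (ex_partial_ext (fun _ => True) (fun _ => c)); auto using open_true.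
    destruct p, i; split; apply ex_derive_const.
Qed.

Lemma smooth2_zero U : smooth2 U (fun _ => RtoC 0).
Proof. intros l p _. exact (continuous_ex_partial_of_const _ (RtoC 0) p (iter_partial_zero l)). Qed.

Lemma smooth2_snd U : smooth2 U (fun p => RtoC (snd p)).
Proof.
  intros [|i l] [x y] _.
  - split.
    + apply continuous_C_components; [apply continuous_snd | apply continuous_const].
    + intro i; destruct i; split; simpl; auto using ex_derive_const, ex_derive_id.
  - destruct (iter_partial_snd i l) as [c Hc]. exact (continuous_ex_partial_of_const _ c _ Hc).
Qed.

(** * Complex-valued functions of one real variable *)

Definition is_Cderive (f : R -> C) (t : R) (l : C) : Prop :=
  is_derive (fun s => fst (f s)) t (fst l) /\ is_derive (fun s => snd (f s)) t (snd l).

Lemma is_Cderive_unique f t l : is_Cderive f t l -> Cderive f t = l.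
Proof.
  intros [H1 H2]. unfold Cderive.
  apply injective_projections; simpl; apply is_derive_unique; assumption.
Qed.

Lemma Cderive_correct f t : ex_Cderive f t -> is_Cderive f t (Cderive f t).
Proof. intros [H1 H2]. split; apply Derive_correct; assumption. Qed.

Lemma is_Cderive_ext_loc f g t l :
  locally t (fun s => f s = g s) -> is_Cderive f t l -> is_Cderive g t l.
Proof.
  intros Hfg [H1 H2].
  split; [ apply (is_derive_ext_loc (fun s => fst (f s)))
         | apply (is_derive_ext_loc (fun s => snd (f s))) ];
    auto; revert Hfg; apply filter_imp; intros s ->; reflexivity.
Qed.

Lemma is_Cderive_const (c : C) t : is_Cderive (fun _ => c) t (RtoC 0).
Proof. split; apply (is_derive_const (K := R_AbsRing) (V := R_NormedModule)). Qed.

Lemma is_Cderive_plus f g t a b : is_Cderive f t a -> is_Cderive g t b ->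
  is_Cderive (fun s => Cplus (f s) (g s)) t (Cplus a b).
Proof.
  intros [F1 F2] [G1 G2].
  split; apply (is_derive_plus (K := R_AbsRing) (V := R_NormedModule)); assumption.
Qed.

Lemma is_Cderive_scal (c : C) f t l :
  is_Cderive f t l -> is_Cderive (fun s => Cmult c (f s)) t (Cmult c l).
Proof.
  destruct c as [c1 c2]. intros [H1 H2]. split; simpl.
  - apply (is_derive_minus (fun s => c1 * fst (f s)) (fun s => c2 * snd (f s)));
      apply is_derive_scal; assumption.
  - apply (is_derive_plus (fun s => c1 * snd (f s)) (fun s => c2 * fst (f s)));
      apply is_derive_scal; assumption.
Qed.

Lemma is_Cderive_mult_r (c : C) f t l :
  is_Cderive f t l -> is_Cderive (fun s => Cmult (f s) c) t (Cmult l c).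
Proof.
  intro H. rewrite Cmult_comm.
  apply (is_Cderive_ext_loc (fun s => Cmult c (f s))).
  - apply filter_forall. intro s. apply Cmult_comm.
  - apply is_Cderive_scal. exact H.
Qed.

Lemma is_Cderive_RtoC (g : R -> R) (t l : R) :
  is_derive g t l -> is_Cderive (fun s => RtoC (g s)) t (RtoC l).
Proof.
  intro H. split; [exact H|]. change (is_derive (fun _ : R => 0) t 0). auto_derive; reflexivity.
Qed.

Lemma is_Cderive_Csum N (F : nat -> R -> C) (D : nat -> C) t :
  (forall n, (n < N)%nat -> is_Cderive (F n) t (D n)) ->
  is_Cderive (fun s => Csum N (fun n => F n s)) t (Csum N D).
Proof.
  induction N as [|N IH]; intro HF; [exact (is_Cderive_const (RtoC 0) t)|].
  change (is_Cderive (fun s => Cplus (Csum N (fun n => F n s)) (F N s)) t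
                     (Cplus (Csum N D) (D N))).
  apply is_Cderive_plus.
  - apply IH. intros n Hn. apply HF. lia.
  - apply HF. lia.
Qed.

Definition Cderive_n (v : R -> C) (n : nat) (t : R) : C :=
  (Derive_n (fun s => fst (v s)) n t, Derive_n (fun s => snd (v s)) n t).

Lemma Cderive_n_O v t : Cderive_n v 0 t = v t.
Proof. unfold Cderive_n; simpl. destruct (v t); reflexivity. Qed.

Lemma smooth1C_ex_derive I v n x : smooth1C I v -> I x ->
  ex_derive (Derive_n (fun s => fst (v s)) n) x /\
  ex_derive (Derive_n (fun s => snd (v s)) n) x.
Proof. intros [S1 S2] Hx. auto. Qed.

Lemma smooth1C_ex_Cderive I v t : smooth1C I v -> I t ->
  ex_Cderive v t /\ ex_Cderive (Cderive v) t.
Proof.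
  intros [S1 S2] Ht.
  split; split; [apply (S1 O) | apply (S2 O) | apply (S1 1%nat) | apply (S2 1%nat)]; exact Ht.
Qed.

Lemma is_Cderive_section U (w : R -> C) (G : R * R -> C) (c : C) x y :
  open U -> U (x, y) -> (forall t, U (t, y) -> w t = Cmult c (G (t, y))) ->
  ex_partial I1 G (x, y) -> is_Cderive w x (Cmult c (partial I1 G (x, y))).
Proof.
  intros HU Hxy Hw HG.
  apply (is_Cderive_ext_loc (fun t => Cmult c (G (t, y)))).
  - generalize (locally_section1 U x y HU Hxy). apply filter_imp. intros t Ht. symmetry. auto.
  - apply is_Cderive_scal. apply (Cderive_correct (fun t => G (t, y))). exact HG.
Qed.

Section SmoothSection.

Variables (U : R * R -> Prop) (f : R * R -> C) (v : R -> C) (K : R -> C).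
Hypothesis HU : open U.
Hypothesis Hf : smooth2 U f.
Hypothesis Hv : forall x y, U (x, y) -> v x = Cmult (K y) (f (x, y)).

Lemma Cderive_n_section n x y : U (x, y) ->
  Cderive_n v n x = Cmult (K y) (iter_partial (repeat I1 n) f (x, y)).
Proof.
  induction n as [|n IH] in x |- *; intro Hxy.
  - rewrite Cderive_n_O. auto.
  - change (Cderive (Cderive_n v n) x =
            Cmult (K y) (partial I1 (iter_partial (repeat I1 n) f) (x, y))).
    apply is_Cderive_unique. apply (is_Cderive_section U); auto.
    apply (Hf (repeat I1 n) (x, y) Hxy).
Qed.

Lemma smooth1C_of_section : smooth1C (proj1U U) v.
Proof.
  assert (D : forall n x, proj1U U x -> is_Cderive (Cderive_n v n) x (Cderive_n v (S n) x)).
  { intros n x [y Hxy]. rewrite (Cderive_n_section (S n) x y Hxy).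
    apply (is_Cderive_section U); auto.
    - intros t Ht. apply Cderive_n_section. exact Ht.
    - apply (Hf (repeat I1 n) (x, y) Hxy). }
  split; intros n x Hx;
    [exists (fst (Cderive_n v (S n) x)); exact (proj1 (D n x Hx))
    |exists (snd (Cderive_n v (S n) x)); exact (proj2 (D n x Hx))].
Qed.

End SmoothSection.

Lemma Cexp_neq0 z : Cexp z <> RtoC 0.
Proof.
  unfold Cexp, RtoC. intro H. injection H as H1 H2.
  assert (He : exp (fst z) > 0) by apply exp_pos.
  apply Rmult_integral in H1 as [H1|H1]; [lra|].
  apply Rmult_integral in H2 as [H2|H2]; [lra|].
  generalize (sin2_cos2 (snd z)). unfold Rsqr. rewrite H1, H2. lra.
Qed.

Lemma Cexp_0_mult y : Cexp (Cmult (RtoC 0) (RtoC y)) = RtoC 1.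
Proof.
  unfold Cexp, Cmult, RtoC. simpl.
  replace (0 * y - 0 * 0) with 0 by ring. replace (0 * 0 + 0 * y) with 0 by ring.
  rewrite exp_0, cos_0, sin_0. f_equal; ring.
Qed.

Lemma Cmult_eq0_cancel_r z w : Cmult z w = RtoC 0 -> w <> RtoC 0 -> z = RtoC 0.
Proof.
  intros H Hw. replace z with (Cmult (Cmult z w) (Cinv w)) by (field; exact Hw).
  rewrite H. ring.
Qed.

Lemma RtoC_mult_eq0_cancel_r r w : Cmult (RtoC r) w = RtoC 0 -> w <> RtoC 0 -> r = 0.
Proof. intros H Hw. apply Cmult_eq0_cancel_r in H; auto. injection H. auto. Qed.

Lemma RtoC_eq_Copp a z : Cplus z (RtoC a) = RtoC 0 -> RtoC a = Copp z.
Proof. intro E. transitivity (Cminus (Cplus z (RtoC a)) z); [ring | rewrite E; ring]. Qed.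

(** * Linear ordinary differential equations on intervals *)

Definition is_open_interval (I : R -> Prop) : Prop :=
  (forall x, I x -> locally x I) /\ (forall a b c, I a -> I b -> a <= c <= b -> I c).

Lemma proj1U_open_interval U : open U -> connected2 U -> is_open_interval (proj1U U).
Proof.
  intros HU HC. split; [intros; apply locally_proj1U; auto|].
  intros a b c [ya Ha] [yb Hb] Hc.
  apply NNPP. intro H.
  assert (Hac : a <> c) by (intro E; subst; apply H; exists ya; auto).
  assert (Hbc : b <> c) by (intro E; subst; apply H; exists yb; auto).
  (* otherwise the half-planes x^1 < c and x^1 > c would disconnect U *)
  destruct (HC (fun q => fst q < c) (fun q => c < fst q)) as [HA|HB].
  - intros [qx qy] Hq. simpl in Hq. assert (Hp : 0 < c - qx) by lra.
    exists (mkposreal _ Hp). intros [zx zy] [Hz _].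
    assert (Hz' : Rabs (zx - qx) < c - qx) by exact Hz.
    apply Rabs_def2 in Hz'. simpl. lra.
  - intros [qx qy] Hq. simpl in Hq. assert (Hp : 0 < qx - c) by lra.
    exists (mkposreal _ Hp). intros [zx zy] [Hz _].
    assert (Hz' : Rabs (zx - qx) < qx - c) by exact Hz.
    apply Rabs_def2 in Hz'. simpl. lra.
  - intros [x y] Hq. simpl. destruct (Rtotal_order x c) as [E|[E|E]]; auto.
    subst. exfalso. apply H. exists y; auto.
  - intros [qx qy] _ H1 H2. simpl in *. lra.
  - specialize (HA _ Hb). simpl in HA. lra.
  - specialize (HB _ Ha). simpl in HB. lra.
Qed.

Lemma is_open_interval_between I a b x : is_open_interval I -> I a -> I b ->
  Rmin a b <= x <= Rmax a b -> I x.
Proof.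
  intros [_ HI] Ha Hb Hx. destruct (Rle_dec a b).
  - rewrite Rmin_left, Rmax_right in Hx by lra. apply (HI a b); auto.
  - rewrite Rmin_right, Rmax_left in Hx by lra. apply (HI b a); auto.
Qed.

Lemma derive_zero_const I h : is_open_interval I -> (forall x, I x -> is_derive h x 0) ->
  forall a b, I a -> I b -> h a = h b.
Proof.
  intros HI Hd a b Ha Hb.
  destruct (MVT_gen h a b (fun _ => 0)) as [c [_ Hc]].
  - intros x Hx. apply Hd. apply (is_open_interval_between I a b); auto. lra.
  - intros x Hx. apply continuity_pt_filterlim.
    apply (ex_derive_continuous (K := R_AbsRing) (V := R_NormedModule)).
    exists 0. apply Hd. apply (is_open_interval_between I a b); auto.
  - lra.
Qed.

Lemma linear_ode_zero I g w x0 : is_open_interval I -> (forall x, I x -> continuous g x) ->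
  (forall x, I x -> is_derive w x (- g x * w x)) -> I x0 -> w x0 = 0 ->
  forall x, I x -> w x = 0.
Proof.
  intros HI Hg Hw Hx0 Hw0.
  set (G := fun x => RInt g x0 x).
  assert (HG : forall x, I x -> is_derive G x (g x)).
  { intros x Hx. apply (is_derive_RInt (V := R_NormedModule) g G x0 x); [| apply Hg; auto].
    generalize (proj1 HI x Hx). apply filter_imp. intros b Hb.
    apply (RInt_correct (V := R_CompleteNormedModule)).
    apply (ex_RInt_continuous (V := R_CompleteNormedModule)).
    intros z Hz. apply Hg. apply (is_open_interval_between I x0 b); auto. }
  (* integrating factor: [w e^G] has zero derivative *)
  set (h := fun x => w x * exp (G x)).
  assert (Hh : forall x, I x -> is_derive h x 0).
  { intros x Hx.
    assert (D := is_derive_mult (K := R_AbsRing) w (fun x => exp (G x)) x _ _ (Hw x Hx)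
                   (is_derive_comp exp G x _ _ (is_derive_exp _) (HG x Hx))
                   ltac:(intros; apply Rmult_comm)).
    replace 0 with (plus (mult (- g x * w x) (exp (G x))) (mult (w x) (scal (g x) (exp (G x))))).
    - exact D.
    - unfold plus, mult, scal; simpl. unfold mult; simpl. ring. }
  intros x Hx.
  assert (E := derive_zero_const I h HI Hh x x0 Hx Hx0). unfold h in E. rewrite Hw0 in E.
  assert (Hp : exp (G x) > 0) by apply exp_pos. nra.
Qed.

Lemma Cderive_nonvanishing I g v x0 : is_open_interval I ->
  (forall x, I x -> continuous g x) -> smooth1C I v ->
  (forall x, I x -> Cplus (Cmult (RtoC (g x)) (Cderive v x)) (Cderive (Cderive v) x) = RtoC 0) ->
  I x0 -> Cderive v x0 <> RtoC 0 -> forall x, I x -> Cderive v x <> RtoC 0.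
Proof.
  intros HI Hg [S1 S2] Hode Hx0 Hnz x Hx E. apply Hnz.
  unfold Cderive, RtoC in E |- *. injection E as E1 E2.
  f_equal; apply (linear_ode_zero I g _ x HI Hg); auto; intros t Ht;
    [ replace (- g t * Derive (fun s => fst (v s)) t) with (Derive_n (fun s => fst (v s)) 2 t);
      [apply Derive_correct, (S1 1%nat t Ht)|]
    | replace (- g t * Derive (fun s => snd (v s)) t) with (Derive_n (fun s => snd (v s)) 2 t);
      [apply Derive_correct, (S2 1%nat t Ht)|] ];
    assert (O := Hode t Ht); unfold Cderive, Cplus, Cmult, RtoC in O; simpl in O;
    injection O as O1 O2; simpl; lra.
Qed.

Lemma Cderive_zero_const I v : is_open_interval I -> smooth1C I v ->
  (forall t, I t -> Cderive v t = RtoC 0) -> forall a b, I a -> I b -> v a = v b.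
Proof.
  intros HI [S1 S2] Hz a b Ha Hb.
  apply injective_projections;
    [ apply (derive_zero_const I (fun s => fst (v s)))
    | apply (derive_zero_const I (fun s => snd (v s))) ];
    auto; intros s Hs;
    [replace 0 with (fst (Cderive v s)) by (rewrite Hz; auto); apply Derive_correct, (S1 O s Hs)
    |replace 0 with (snd (Cderive v s)) by (rewrite Hz; auto); apply Derive_correct, (S2 O s Hs)].
Qed.

(** * Polynomials *)

Lemma Csum_ext N (a b : nat -> C) : (forall n, a n = b n) -> Csum N a = Csum N b.
Proof. intro H. induction N as [|N IH]; simpl; [reflexivity|]. rewrite IH, H. reflexivity. Qed.

Lemma Csum_plus N (a b : nat -> C) :
  Cplus (Csum N a) (Csum N b) = Csum N (fun n => Cplus (a n) (b n)).
Proof. induction N as [|N IH]; simpl; [ring|]. rewrite <- IH. ring. Qed.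

Lemma Csum_mult_l N (c : C) (a : nat -> C) :
  Cmult c (Csum N a) = Csum N (fun n => Cmult c (a n)).
Proof. induction N as [|N IH]; simpl; [ring|]. rewrite <- IH. ring. Qed.

Lemma Cpoly_derive N (a : nat -> C) y :
  is_Cderive (fun s => Csum (S N) (fun n => Cmult (a n) (RtoC (s ^ n)))) y
             (Csum N (fun n => Cmult (Cmult (RtoC (INR (S n))) (a (S n))) (RtoC (y ^ n)))).
Proof.
  induction N as [|N IH].
  - apply (is_Cderive_ext_loc (fun _ => a O)).
    + apply filter_forall. intro s. cbn [Csum pow]. ring.
    + apply is_Cderive_const.
  - replace (Csum (S N) (fun n => Cmult (Cmult (RtoC (INR (S n))) (a (S n))) (RtoC (y ^ n))))
      with (Cplus (Csum N (fun n => Cmult (Cmult (RtoC (INR (S n))) (a (S n))) (RtoC (y ^ n))))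
                  (Cmult (a (S N)) (RtoC (INR (S N) * 1 * y ^ Nat.pred (S N)))))
      by (cbn [Csum Nat.pred]; rewrite !RtoC_mult; ring).
    apply is_Cderive_plus; [exact IH|].
    apply is_Cderive_scal, is_Cderive_RtoC, is_derive_pow, (is_derive_id (K := R_AbsRing)).
Qed.

Lemma Cpoly_high_coeffs_zero N (a : nat -> C) y :
  (forall n, (n < N)%nat -> a (S n) = RtoC 0) ->
  Csum (S N) (fun n => Cmult (a n) (RtoC (y ^ n))) = a O.
Proof.
  induction N as [|N IH]; intro H; [simpl; ring|].
  change (Cplus (Csum (S N) (fun n => Cmult (a n) (RtoC (y ^ n))))
                (Cmult (a (S N)) (RtoC (y ^ S N))) = a O).
  rewrite IH by (intros; apply H; lia). rewrite H by lia. ring.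
Qed.

Lemma Cpoly_locally_zero N : forall (a : nat -> C) y0,
  locally y0 (fun y => Csum N (fun n => Cmult (a n) (RtoC (y ^ n))) = RtoC 0) ->
  forall n, (n < N)%nat -> a n = RtoC 0.
Proof.
  induction N as [|N IH]; intros a y0 Hl n Hn; [lia|].
  assert (Hd : forall n, (n < N)%nat -> a (S n) = RtoC 0).
  { intros m Hm.
    assert (Z : Cmult (RtoC (INR (S m))) (a (S m)) = RtoC 0).
    { apply (IH (fun n => Cmult (RtoC (INR (S n))) (a (S n))) y0); auto.
      generalize (locally_locally _ _ Hl). apply filter_imp. intros y Hy.
      rewrite <- (is_Cderive_unique _ _ _ (Cpoly_derive N a y)).
      apply is_Cderive_unique, (is_Cderive_ext_loc (fun _ => RtoC 0)).
      - revert Hy. apply filter_imp. intros s Hs. symmetry. exact Hs.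
      - apply is_Cderive_const. }
    rewrite Cmult_comm in Z. apply Cmult_eq0_cancel_r in Z; auto.
    intro E. injection E as E. exact (not_0_INR (S m) ltac:(lia) E). }
  destruct n as [|m]; [|apply Hd; lia].
  rewrite <- (Cpoly_high_coeffs_zero N a y0 Hd). apply (locally_singleton _ _ Hl).
Qed.

Lemma partial1_Cpoly N (f : nat -> R -> C) t s :
  (forall n, (n < N)%nat -> ex_Cderive (f n) t) ->
  partial I1 (fun p => Csum N (fun n => Cmult (f n (fst p)) (RtoC (snd p ^ n)))) (t, s)
  = Csum N (fun n => Cmult (Cderive (f n) t) (RtoC (s ^ n))).
Proof.
  intro H. apply is_Cderive_unique. simpl.
  apply (is_Cderive_Csum N (fun n t => Cmult (f n t) (RtoC (s ^ n)))).
  intros n Hn. apply is_Cderive_mult_r, Cderive_correct, H, Hn.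
Qed.

(** * The fields e^(alpha x^2) v(x^1) d/dx^2 *)

(* [partial I1 ^ n (partial I2 ^ k)] of [(x, y) |-> e^(al y) v x] *)
Definition expmode (al : C) (v : R -> C) (n k : nat) (p : R * R) : C :=
  Cmult (Cmult (Cpow al k) (Cexp (Cmult al (RtoC (snd p))))) (Cderive_n v n (fst p)).

Lemma expmode_O_O al v p :
  expmode al v 0 0 p = Cmult (Cexp (Cmult al (RtoC (snd p)))) (v (fst p)).
Proof. unfold expmode. rewrite Cderive_n_O. simpl. ring. Qed.

Lemma partial2_expmode al v n k p : partial I2 (expmode al v n k) p = expmode al v n (S k) p.
Proof.
  destruct p as [x y]. unfold partial, Cderive, expmode, Cexp. rewrite Cpow_S.
  destruct al as [a b]. destruct (Cpow (a, b) k) as [c1 c2]. simpl.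
  unfold Cderive_n; simpl.
  set (w1 := Derive_n _ n x). set (w2 := Derive_n _ n x).
  unfold Cmult; simpl. f_equal; apply is_derive_unique; auto_derive; auto; unfold Rminus; ring.
Qed.

Lemma partial1_expmode al v n k p :
  ex_derive (Derive_n (fun s => fst (v s)) n) (fst p) ->
  ex_derive (Derive_n (fun s => snd (v s)) n) (fst p) ->
  partial I1 (expmode al v n k) p = expmode al v (S n) k p.
Proof.
  intros H1 H2.
  destruct p as [x y]. unfold partial, Cderive, expmode, Cexp, Cderive_n.
  destruct al as [a b]. destruct (Cpow (a, b) k) as [c1 c2]. simpl in *.
  set (w1 := Derive_n (fun s : R => fst (v s)) n) in *.
  set (w2 := Derive_n (fun s : R => snd (v s)) n) in *.
  unfold Cmult; simpl.
  f_equal; apply is_derive_unique; auto_derive; auto; unfold Rminus;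
    try change (fun x0 : R => w1 x0) with w1; try change (fun x0 : R => w2 x0) with w2; ring.
Qed.

Lemma ex_partial1_expmode al v n k p :
  ex_derive (Derive_n (fun s => fst (v s)) n) (fst p) ->
  ex_derive (Derive_n (fun s => snd (v s)) n) (fst p) ->
  ex_partial I1 (expmode al v n k) p.
Proof.
  intros H1 H2.
  destruct p as [x y]. unfold ex_partial, ex_Cderive, expmode, Cexp, Cderive_n.
  destruct al as [a b]. destruct (Cpow (a, b) k) as [c1 c2]. simpl in *.
  set (w1 := Derive_n (fun s : R => fst (v s)) n) in *.
  set (w2 := Derive_n (fun s : R => snd (v s)) n) in *.
  split; auto_derive; auto.
Qed.

Lemma ex_partial2_expmode al v n k p : ex_partial I2 (expmode al v n k) p.
Proof.
  destruct p as [x y]. unfold ex_partial, ex_Cderive, expmode, Cexp, Cderive_n.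
  destruct al as [a b]. destruct (Cpow (a, b) k) as [c1 c2]. simpl.
  split; auto_derive; auto.
Qed.

Lemma continuous_expmode al v n k p :
  ex_derive (Derive_n (fun s => fst (v s)) n) (fst p) ->
  ex_derive (Derive_n (fun s => snd (v s)) n) (fst p) ->
  continuous (expmode al v n k) p.
Proof.
  intros H1 H2. destruct p as [x y].
  apply (continuous_Cmult
           (fun q : R * R => Cmult (Cpow al k) (Cexp (Cmult al (RtoC (snd q)))))
           (fun q : R * R => Cderive_n v n (fst q))).
  - apply (continuous_comp snd (fun s => Cmult (Cpow al k) (Cexp (Cmult al (RtoC s)))));
      [apply continuous_snd|].
    unfold Cexp. destruct al as [a b]. destruct (Cpow (a, b) k) as [c1 c2].
    apply continuous_C_components; simpl;
      apply (ex_derive_continuous (K := R_AbsRing) (V := R_NormedModule)); auto_derive; auto.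
  - apply (continuous_comp fst (Cderive_n v n)); [apply continuous_fst|].
    apply continuous_C_components; simpl;
      apply (ex_derive_continuous (K := R_AbsRing) (V := R_NormedModule)); auto.
Qed.

Definition idx_eqb (i j : idx) : bool :=
  match i, j with I1, I1 | I2, I2 => true | _, _ => false end.

Definition count_idx (i : idx) (l : list idx) : nat := length (filter (idx_eqb i) l).

Lemma iter_partial_expmode U al v : open U -> smooth1C (proj1U U) v ->
  forall l q, U q ->
  iter_partial l (expmode al v 0 0) q = expmode al v (count_idx I1 l) (count_idx I2 l) q.
Proof.
  intros HU Hv l. induction l as [|i l IH]; intros q Hq; [reflexivity|]. cbn [iter_partial].
  rewrite (partial_ext U _ _ i q HU IH Hq).
  destruct q as [x y].
  destruct (smooth1C_ex_derive _ v (count_idx I1 l) x Hv (ex_intro _ y Hq)).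
  destruct i; unfold count_idx; cbn [filter idx_eqb length].
  - apply partial1_expmode; auto.
  - apply partial2_expmode.
Qed.

Lemma smooth2_expmode U al v : open U -> smooth1C (proj1U U) v ->
  smooth2 U (expmode al v 0 0).
Proof.
  intros HU Hv l [x y] Hq.
  destruct (smooth1C_ex_derive _ v (count_idx I1 l) x Hv (ex_intro _ y Hq)).
  assert (E := iter_partial_expmode U al v HU Hv l). split.
  - apply (continuous_ext_loc _ (expmode al v (count_idx I1 l) (count_idx I2 l))).
    + generalize (HU _ Hq). apply filter_imp. intros q Hq'. symmetry. exact (E q Hq').
    + apply continuous_expmode; assumption.
  - intro i. apply (ex_partial_ext U (expmode al v (count_idx I1 l) (count_idx I2 l))).
    + exact HU.
    + intros q Hq'. symmetry. exact (E q Hq').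
    + exact Hq.
    + destruct i; [apply ex_partial1_expmode; assumption | apply ex_partial2_expmode].
Qed.

Lemma partial2_GamC Gam i j k p : partial I2 (GamC Gam i j k) p = RtoC 0.
Proof. destruct p. unfold partial, Cderive, GamC. simpl. rewrite !Derive_const. reflexivity. Qed.

(* The (i, j, k) affine Killing equation of [e^(al y) v(x) d/dy], divided by [e^(al y)]. *)
Definition killing_residue (Gam : idx -> idx -> idx -> R -> R) (al : C) (v : R -> C)
  (x : R) (i j k : idx) : C :=
  let G a b c := RtoC (Gam a b c x) in
  let V0 := Cderive_n v 0 x in let V1 := Cderive_n v 1 x in let V2 := Cderive_n v 2 x in
  match k, i, j with
  | I1, I1, I1 => Cmult (Cplus (G I1 I2 I1) (G I2 I1 I1)) V1
  | I1, I1, I2 => Cplus (Cmult (Cmult (G I1 I2 I1) al) V0) (Cmult (G I2 I2 I1) V1)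
  | I1, I2, I1 => Cplus (Cmult (G I2 I2 I1) V1) (Cmult (Cmult (G I2 I1 I1) al) V0)
  | I1, I2, I2 => Cmult (Cmult (Cmult (RtoC 2) (G I2 I2 I1)) al) V0
  | I2, I1, I1 => Cplus (Cminus (Cminus V2 (Cmult (G I1 I1 I1) V1))
                                (Cmult (Cmult (G I1 I1 I2) al) V0))
                        (Cmult (Cplus (G I1 I2 I2) (G I2 I1 I2)) V1)
  | I2, I1, I2 => Cplus (Cminus (Cmult al V1) (Cmult (G I1 I2 I1) V1)) (Cmult (G I2 I2 I2) V1)
  | I2, I2, I1 => Cplus (Cminus (Cmult al V1) (Cmult (G I2 I1 I1) V1)) (Cmult (G I2 I2 I2) V1)
  | I2, I2, I2 => Cplus (Cminus (Cmult (Cmult al al) V0) (Cmult (G I2 I2 I1) V1))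
                        (Cmult (Cmult (G I2 I2 I2) al) V0)
  end.

Lemma Killing_eq_expmode U Gam al v (X : idx -> R * R -> C) :
  open U -> smooth1C (proj1U U) v ->
  (forall q, U q -> X I1 q = RtoC 0) ->
  (forall q, U q -> X I2 q = expmode al v 0 0 q) ->
  forall p, U p -> forall i j k,
  Killing_eq Gam X p i j k <-> killing_residue Gam al v (fst p) i j k = RtoC 0.
Proof.
  intros HU Hv H1 H2 [x y] Hp.
  assert (Z := iter_partial_ext U _ _ HU H1).
  assert (P : forall l, iter_partial l (X I2) (x, y) =
                        expmode al v (count_idx I1 l) (count_idx I2 l) (x, y)).
  { intro l. rewrite (iter_partial_ext U _ _ HU H2 l _ Hp). apply (iter_partial_expmode U); auto. }
  assert (Z2 : forall i j, partial i (partial j (X I1)) (x, y) = RtoC 0).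
  { intros i j. exact (eq_trans (Z (i :: j :: nil) _ Hp) (iter_partial_zero _ _)). }
  assert (Z1 : forall i, partial i (X I1) (x, y) = RtoC 0).
  { intro i. exact (eq_trans (Z (i :: nil) _ Hp) (iter_partial_zero _ _)). }
  assert (P2 := fun i j => P (i :: j :: nil)). assert (P1 := fun i => P (i :: nil)).
  cbn [iter_partial] in P1, P2.
  intros i j k. cbn [fst]. unfold Killing_eq, sum_idx.
  transitivity (Cmult (Cexp (Cmult al (RtoC y))) (killing_residue Gam al v x i j k) = RtoC 0).
  2:{ split; intro E; [|rewrite E; ring].
      apply (Cmult_eq0_cancel_r _ _ (eq_trans (Cmult_comm _ _) E)), Cexp_neq0. }
  destruct i, j, k; rewrite ?Z2, ?P2, ?Z1, ?P1, ?H1, ?partial2_GamC by auto;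
    unfold GamC, expmode, killing_residue, count_idx; cbn [filter idx_eqb length Cpow fst snd];
    match goal with |- ?L = _ <-> ?R = _ => replace L with R; [tauto|] end; ring.
Qed.

Lemma residues_of_K_alpha_shape U Gam al X v : open U -> KC U Gam X ->
  (forall p, U p -> X I1 p = RtoC 0 /\
                    X I2 p = Cmult (Cexp (Cmult al (RtoC (snd p)))) (v (fst p))) ->
  smooth1C (proj1U U) v /\
  (forall x, proj1U U x -> forall i j k, killing_residue Gam al v x i j k = RtoC 0).
Proof.
  intros HU [Hsm HK] Hv.
  assert (Hvs : smooth1C (proj1U U) v).
  { apply (smooth1C_of_section U (X I2) v (fun y => Cinv (Cexp (Cmult al (RtoC y))))); auto.
    intros x y Hxy. rewrite (proj2 (Hv _ Hxy)). simpl. field. apply Cexp_neq0. }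
  split; [exact Hvs|]. intros x [y Hxy] i j k.
  apply (proj1 (Killing_eq_expmode U Gam al v X HU Hvs (fun q Hq => proj1 (Hv q Hq))
                  (fun q Hq => eq_trans (proj2 (Hv q Hq)) (eq_sym (expmode_O_O al v q)))
                  (x, y) Hxy i j k)).
  apply HK; exact Hxy.
Qed.

Lemma killing_residue_112 Gam al v x :
  Gam I1 I1 I1 x = 0 -> Gam I1 I1 I2 x = 0 ->
  killing_residue Gam al v x I1 I1 I2 =
  Cplus (Cmult (RtoC (Gam I1 I2 I2 x + Gam I2 I1 I2 x)) (Cderive v x)) (Cderive (Cderive v) x).
Proof.
  intros G111 G112. unfold killing_residue. rewrite G111, G112, RtoC_plus.
  change (Cderive v x) with (Cderive_n v 1 x).
  change (Cderive (Cderive v) x) with (Cderive_n v 2 x). ring.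
Qed.

Lemma residues_of_star Gam al v x :
  Gam I1 I1 I1 x = 0 /\ Gam I1 I1 I2 x = 0 /\ Gam I1 I2 I1 x = 0 /\
  Gam I2 I1 I1 x = 0 /\ Gam I2 I2 I1 x = 0 /\ RtoC (Gam I2 I2 I2 x) = Copp al ->
  Cplus (Cmult (RtoC (Gam I1 I2 I2 x + Gam I2 I1 I2 x)) (Cderive v x))
        (Cderive (Cderive v) x) = RtoC 0 ->
  forall i j k, killing_residue Gam al v x i j k = RtoC 0.
Proof.
  intros [G111 [G112 [G121 [G211 [G221 G222]]]]] Hode i j k.
  destruct i, j, k; try (rewrite killing_residue_112 by assumption; exact Hode);
    unfold killing_residue; rewrite ?G111, ?G112, ?G121, ?G211, ?G221, ?G222; ring.
Qed.

Lemma star_of_residues_deriv_neq0 Gam al v x :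
  (forall i j k, killing_residue Gam al v x i j k = RtoC 0) -> Cderive v x <> RtoC 0 ->
  Gam I1 I2 I1 x = 0 /\ Gam I2 I1 I1 x = 0 /\ Gam I2 I2 I1 x = 0 /\
  RtoC (Gam I2 I2 I2 x) = Copp al.
Proof.
  intros HQ Hv1.
  assert (Q111 := HQ I1 I1 I1). assert (Q121 := HQ I1 I2 I1).
  assert (Q122 := HQ I1 I2 I2). assert (Q212 := HQ I2 I1 I2).
  unfold killing_residue in Q111, Q121, Q122, Q212. cbv zeta in Q111, Q121, Q122, Q212.
  change (Cderive_n v 1 x) with (Cderive v x) in *.
  apply Cmult_eq0_cancel_r in Q111; auto.
  assert (E1 : Cmult (Cplus (Cminus al (RtoC (Gam I1 I2 I1 x))) (RtoC (Gam I2 I2 I2 x)))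
                     (Cderive v x) = RtoC 0) by (rewrite <- Q122; ring).
  assert (E2 : Cmult (Cplus (Cminus al (RtoC (Gam I2 I1 I1 x))) (RtoC (Gam I2 I2 I2 x)))
                     (Cderive v x) = RtoC 0) by (rewrite <- Q212; ring).
  apply Cmult_eq0_cancel_r in E1; auto. apply Cmult_eq0_cancel_r in E2; auto.
  assert (G121 : Gam I1 I2 I1 x = 0 /\ Gam I2 I1 I1 x = 0).
  { apply (f_equal fst) in Q111, E1, E2. destruct al as [a b].
    unfold Cminus, Cplus, Copp, RtoC in Q111, E1, E2. simpl in Q111, E1, E2. lra. }
  destruct G121 as [G121 G211].
  rewrite G121 in Q121.
  assert (G221 : Cmult (RtoC (Gam I2 I2 I1 x)) (Cderive v x) = RtoC 0)
    by (rewrite <- Q121; ring).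
  apply RtoC_mult_eq0_cancel_r in G221; auto.
  repeat split; auto. apply RtoC_eq_Copp. rewrite <- E1, G121. ring.
Qed.

Lemma star_of_residues_deriv_eq0 Gam al v x :
  (forall i j k, killing_residue Gam al v x i j k = RtoC 0) -> Cderive v x = RtoC 0 ->
  al <> RtoC 0 -> v x <> RtoC 0 ->
  Gam I1 I2 I1 x = 0 /\ Gam I2 I1 I1 x = 0 /\ Gam I2 I2 I1 x = 0 /\
  RtoC (Gam I2 I2 I2 x) = Copp al.
Proof.
  intros HQ Hv1 Hal Hv0.
  assert (Q121 := HQ I1 I2 I1). assert (Q211 := HQ I2 I1 I1).
  assert (Q221 := HQ I2 I2 I1). assert (Q222 := HQ I2 I2 I2).
  unfold killing_residue in Q121, Q211, Q221, Q222. cbv zeta in Q121, Q211, Q221, Q222.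
  change (Cderive_n v 1 x) with (Cderive v x) in *. rewrite Hv1 in *.
  rewrite Cderive_n_O in *.
  assert (Hav : Cmult al (v x) <> RtoC 0) by (apply Cmult_neq_0; auto).
  assert (E1 : Cmult (RtoC (Gam I2 I2 I1 x)) (Cmult (Cmult (RtoC 2) al) (v x)) = RtoC 0)
    by (rewrite <- Q221; ring).
  apply RtoC_mult_eq0_cancel_r in E1.
  2:{ apply Cmult_neq_0; auto. apply Cmult_neq_0; auto.
      intro H2. injection H2. lra. }
  assert (E2 : Cmult (RtoC (Gam I1 I2 I1 x)) (Cmult al (v x)) = RtoC 0)
    by (rewrite <- Q121; ring).
  assert (E3 : Cmult (RtoC (Gam I2 I1 I1 x)) (Cmult al (v x)) = RtoC 0)
    by (rewrite <- Q211; ring).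
  assert (E4 : Cmult (Cplus al (RtoC (Gam I2 I2 I2 x))) (Cmult al (v x)) = RtoC 0)
    by (rewrite <- Q222; ring).
  apply RtoC_mult_eq0_cancel_r in E2, E3; auto. apply Cmult_eq0_cancel_r in E4; auto.
  repeat split; auto. apply RtoC_eq_Copp; auto.
Qed.

(** * Affine Killing fields when Gamma_11^1 = Gamma_11^2 = 0 *)

Section AffineKilling.

Variables (U : R * R -> Prop) (Gam : idx -> idx -> idx -> R -> R).
Hypothesis HU : open U.
Hypothesis H111 : forall x, proj1U U x -> Gam I1 I1 I1 x = 0.
Hypothesis H112 : forall x, proj1U U x -> Gam I1 I1 I2 x = 0.

Lemma star_of_K_alpha (HC : connected2 U)
  (HG : forall i j k, smooth1 (proj1U U) (Gam i j k)) al X :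
  K_alpha U Gam al X ->
  ~ (exists c : C, forall p, U p -> X I1 p = RtoC 0 /\ X I2 p = c) ->
  star U Gam al.
Proof.
  intros [HKC [v Hv]] Hnc.
  destruct (residues_of_K_alpha_shape U Gam al X v HU HKC Hv) as [Hvs HQ].
  assert (HI := proj1U_open_interval U HU HC).
  intros x Hx. do 2 (split; [auto|]).
  destruct (classic (exists x0, proj1U U x0 /\ Cderive v x0 <> RtoC 0))
    as [[x0 [Hx0 Hnz]] | Hz].
  - apply (star_of_residues_deriv_neq0 Gam al v x (HQ x Hx)).
    apply (Cderive_nonvanishing (proj1U U) (fun t => Gam I1 I2 I2 t + Gam I2 I1 I2 t) v x0);
      auto.
    + intros t Ht. apply (ex_derive_continuous (K := R_AbsRing) (V := R_NormedModule)).
      apply (ex_derive_plus (Gam I1 I2 I2) (Gam I2 I1 I2)); apply (HG _ _ _ O); exact Ht.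
    + intros t Ht. rewrite <- (killing_residue_112 Gam al v t); auto.
  - assert (Hz' : forall t, proj1U U t -> Cderive v t = RtoC 0).
    { intros t Ht. apply NNPP. intro N. apply Hz. exists t. auto. }
    assert (Hc : forall p, U p -> v (fst p) = v x).
    { intros [t s] Hp. apply (Cderive_zero_const (proj1U U)); auto. exists s; exact Hp. }
    apply (star_of_residues_deriv_eq0 Gam al v x (HQ x Hx)); auto.
    + intro Hal. apply Hnc. exists (v x). intros p Hp. destruct (Hv p Hp) as [A B].
      split; auto. rewrite B, Hal, Cexp_0_mult, Hc by exact Hp. ring.
    + intro Hv0. apply Hnc. exists (RtoC 0). intros p Hp. destruct (Hv p Hp) as [A B].
      split; auto. rewrite B, Hc, Hv0 by exact Hp. ring.
Qed.

Lemma partial1_GamC_zero i j k x y : U (x, y) ->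
  (forall t, proj1U U t -> Gam i j k t = 0) -> partial I1 (GamC Gam i j k) (x, y) = RtoC 0.
Proof.
  intros Hp HZ. unfold partial, Cderive, GamC. simpl. rewrite Derive_const.
  rewrite (Derive_ext_loc _ (fun _ => 0)); [rewrite Derive_const; reflexivity|].
  generalize (locally_proj1U U x HU (ex_intro _ y Hp)). apply filter_imp. intros t Ht. auto.
Qed.

Lemma Killing_eq_112_ode u w p : U p -> Killing_eq Gam (vf u w) p I1 I1 I2 ->
  Cplus (Cmult (RtoC (Gam I1 I2 I2 (fst p) + Gam I2 I1 I2 (fst p))) (partial I1 w p))
        (partial I1 (partial I1 w) p) = RtoC 0.
Proof.
  intros Hp K. destruct p as [x y]. assert (Hx : proj1U U x) by (exists y; exact Hp).
  unfold Killing_eq, sum_idx in K.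
  rewrite (partial1_GamC_zero I1 I1 I2 x y Hp H112), partial2_GamC in K.
  unfold GamC in K. cbn [vf fst snd] in K |- *.
  rewrite (H111 x Hx), (H112 x Hx) in K. rewrite <- K, RtoC_plus. ring.
Qed.

Section Star.

Variable al : C.
Hypothesis Hst : star U Gam al.

Lemma Killing_eq_221_star u w p : U p -> Killing_eq Gam (vf u w) p I2 I2 I1 ->
  Cplus (Cmult al (partial I2 u p)) (partial I2 (partial I2 u) p) = RtoC 0.
Proof.
  intros Hp K. destruct p as [x y].
  destruct (Hst x (ex_intro _ y Hp)) as [_ [_ [G121 [G211 [G221 G222]]]]].
  unfold Killing_eq, sum_idx in K.
  rewrite (partial1_GamC_zero I2 I2 I1 x y Hp), partial2_GamC in K
    by (intros t Ht; apply (Hst t Ht)).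
  unfold GamC in K. cbn [vf fst snd] in K.
  rewrite G222, G121, G211, G221 in K. rewrite <- K. ring.
Qed.

Lemma K_alpha_iff_ode X :
  K_alpha U Gam al X <->
  exists v : R -> C,
    smooth1C (proj1U U) v /\
    (forall x, proj1U U x ->
       Cplus (Cmult (RtoC (Gam I1 I2 I2 x + Gam I2 I1 I2 x)) (Cderive v x))
             (Cderive (Cderive v) x) = RtoC 0) /\
    (forall p, U p ->
       X I1 p = RtoC 0 /\ X I2 p = Cmult (Cexp (Cmult al (RtoC (snd p)))) (v (fst p))).
Proof.
  split.
  - intros [HKC [v Hv]].
    destruct (residues_of_K_alpha_shape U Gam al X v HU HKC Hv) as [Hvs HQ].
    exists v. split; [exact Hvs | split; [|exact Hv]].
    intros x Hx. rewrite <- (killing_residue_112 Gam al v x); auto.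
  - intros [v [Hvs [Hode Hv]]].
    assert (H1 : forall q, U q -> X I1 q = RtoC 0) by (intros; apply Hv; auto).
    assert (H2 : forall q, U q -> X I2 q = expmode al v 0 0 q)
      by (intros; rewrite expmode_O_O; apply Hv; auto).
    split; [split|exists v; exact Hv].
    + intros [|].
      * apply (smooth2_ext U _ _ HU H1), smooth2_zero.
      * apply (smooth2_ext U _ _ HU H2), smooth2_expmode; auto.
    + intros [x y] Hp i j k. assert (Hx : proj1U U x) by (exists y; exact Hp).
      apply (Killing_eq_expmode U Gam al v X HU Hvs H1 H2 (x, y) Hp).
      apply residues_of_star; auto.
Qed.

End Star.

Lemma K_alpha0_of_polynomial_component (Hst : star U Gam (RtoC 0)) u N wn :
  (forall n, (n < N)%nat -> smooth1C (proj1U U) (wn n)) ->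
  KC U Gam (vf u (fun p => Csum N (fun n => Cmult (wn n (fst p)) (RtoC (snd p ^ n))))) ->
  forall n, (n < N)%nat ->
    K_alpha U Gam (RtoC 0) (vf (fun _ => RtoC 0) (fun p => wn n (fst p))).
Proof.
  intros Hsm [_ HK] n Hn.
  apply (proj2 (K_alpha_iff_ode (RtoC 0) Hst _)).
  exists (wn n). split; [auto | split].
  2:{ intros [x y] Hp. cbn [vf fst snd]. split; [reflexivity|]. rewrite Cexp_0_mult. ring. }
  intros x [y Hxy].
  set (W := fun p : R * R => Csum N (fun m => Cmult (wn m (fst p)) (RtoC (snd p ^ m)))).
  assert (D : forall m t, (m < N)%nat -> proj1U U t ->
                ex_Cderive (wn m) t /\ ex_Cderive (Cderive (wn m)) t).
  { intros m t Hm Ht. apply (smooth1C_ex_Cderive (proj1U U)); auto. }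
  set (g := RtoC (Gam I1 I2 I2 x + Gam I2 I1 I2 x)).
  apply (Cpoly_locally_zero N (fun m => Cplus (Cmult g (Cderive (wn m) x))
                                              (Cderive (Cderive (wn m)) x)) y); auto.
  generalize (locally_section2 U x y HU Hxy). apply filter_imp. intros s Hs.
  assert (K := Killing_eq_112_ode u W (x, s) Hs (HK _ Hs I1 I1 I2)). cbn [fst] in K. fold g in K.
  assert (E1 : partial I1 W (x, s) = Csum N (fun m => Cmult (Cderive (wn m) x) (RtoC (s ^ m)))).
  { apply partial1_Cpoly. intros m Hm. exact (proj1 (D m x Hm (ex_intro _ s Hs))). }
  assert (E2 : partial I1 (partial I1 W) (x, s) =
               Csum N (fun m => Cmult (Cderive (Cderive (wn m)) x) (RtoC (s ^ m)))).
  { transitivity (partial I1 (fun p => Csum N (fun m => Cmult (Cderive (wn m) (fst p))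
                                                               (RtoC (snd p ^ m)))) (x, s)).
    - apply (partial_ext U); auto. intros [t r] Htr.
      apply partial1_Cpoly. intros m Hm. exact (proj1 (D m t Hm (ex_intro _ r Htr))).
    - apply (partial1_Cpoly N (fun m => Cderive (wn m))).
      intros m Hm. exact (proj2 (D m x Hm (ex_intro _ s Hs))). }
  rewrite <- K, E1, E2, Csum_mult_l, Csum_plus. apply Csum_ext. intro m. ring.
Qed.

Lemma KR_snd (Hst : star U Gam (RtoC 0)) :
  KR U Gam (vf (fun _ => RtoC 0) (fun p => RtoC (snd p))).
Proof.
  split; [split|].
  - intros [|]; [apply smooth2_zero | apply smooth2_snd].
  - intros [x y] Hp i j k.
    destruct (Hst x (ex_intro _ y Hp)) as [G111 [G112 [G121 [G211 [G221 G222]]]]].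
    unfold Killing_eq, sum_idx.
    destruct i, j, k; cbn [vf];
      rewrite ?partial_partial_const, ?partial_partial_snd, ?partial_const,
              ?partial1_snd, ?partial2_GamC;
      unfold GamC; cbn [fst snd]; rewrite ?G111, ?G112, ?G121, ?G211, ?G221, ?G222; ring.
  - intros [|] p _; reflexivity.
Qed.

End AffineKilling.

Theorem lemma3p2
  (U : R * R -> Prop) (Gam : idx -> idx -> idx -> R -> R)
  (HUopen : open U) (HUconn : connected2 U)
  (HGsmooth : forall i j k, smooth1 (proj1U U) (Gam i j k))
  (H111 : forall x, proj1U U x -> Gam I1 I1 I1 x = 0%R)
  (H112 : forall x, proj1U U x -> Gam I1 I1 I2 x = 0%R) :
  (* (1) *)
  (forall (alpha : C) (X : idx -> R * R -> C),
      K_alpha U Gam alpha X ->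
      ~ (exists c : C, forall p, U p -> X I1 p = RtoC 0 /\ X I2 p = c) ->
      star U Gam alpha)
  /\
  (* (2) *)
  (forall alpha : C, star U Gam alpha ->
     (* (a) *)
     (forall u w : R * R -> C, KC U Gam (vf u w) ->
        forall p, U p ->
          Cplus (Cmult alpha (partial I2 u p)) (partial I2 (partial I2 u) p)
            = RtoC 0 /\
          Cplus (Cmult (RtoC (Gam I1 I2 I2 (fst p) + Gam I2 I1 I2 (fst p)))
                       (partial I1 w p))
                (partial I1 (partial I1 w) p) = RtoC 0)
     /\
     (* (b) *)
     (forall X : idx -> R * R -> C,
        K_alpha U Gam alpha X <->
        exists v : R -> C,
          smooth1C (proj1U U) v /\
          (forall x, proj1U U x ->
             Cplus (Cmult (RtoC (Gam I1 I2 I2 x + Gam I2 I1 I2 x))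
                          (Cderive v x))
                   (Cderive (Cderive v) x) = RtoC 0) /\
          (forall p, U p ->
             X I1 p = RtoC 0 /\
             X I2 p = Cmult (Cexp (Cmult alpha (RtoC (snd p)))) (v (fst p))))
     /\
     (* (c) *)
     (alpha = RtoC 0 ->
        (forall (u : R * R -> C) (N : nat) (wn : nat -> R -> C),
           (forall n, (n < N)%nat -> smooth1C (proj1U U) (wn n)) ->
           KC U Gam (vf u (fun p => Csum N (fun n =>
                              Cmult (wn n (fst p)) (RtoC (snd p ^ n))))) ->
           forall n, (n < N)%nat ->
             K_alpha U Gam (RtoC 0)
               (vf (fun _ => RtoC 0) (fun p => wn n (fst p))))
        /\
        KR U Gam (vf (fun _ => RtoC 0) (fun p => RtoC (snd p))))).
Proof.
  split; [exact (star_of_K_alpha U Gam HUopen H111 H112 HUconn HGsmooth)|].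
  intros alpha Hst. split; [|split].
  - intros u w [_ HK] p Hp. split.
    + apply (Killing_eq_221_star U Gam HUopen alpha Hst u w p Hp (HK p Hp I2 I2 I1)).
    + apply (Killing_eq_112_ode U Gam HUopen H111 H112 u w p Hp (HK p Hp I1 I1 I2)).
  - exact (K_alpha_iff_ode U Gam HUopen H111 H112 alpha Hst).
  - intros ->. split.
    + exact (K_alpha0_of_polynomial_component U Gam HUopen H111 H112 Hst).
    + exact (KR_snd U Gam Hst).
Qed.
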